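(* Let $\mathcal F$ be a saturated fusion system on a finite $p$-group $S$, and let $\mathcal G$ be a saturated subsystem of $\mathcal F$ on a subgroup $T\le S$. Suppose there exists an $\mathcal F$-centric subgroup $Q\le T$ with $\operatorname{Hom}_\mathcal F(Q,T)=\operatorname{Hom}_\mathcal G(Q,T)$. Then $\operatorname{Aut}_\mathcal F(T)=\operatorname{Aut}_\mathcal G(T)$ and $T=S$.
   Context: Fusion systems: Let $S$ be a finite $p$-group. A fusion system $\mathcal F$ on $S$ is a category whose objects are the subgroups of $S$ and whose morphism sets $\operatorname{Hom}_\mathcal F(P,R)$ are sets of injective group homomorphisms $P\to R$, such that (i) every conjugation map $x\mapsto gxg^{-1}$, $g\in S$, from $P$ to $R$ lies in $\operatorname{Hom}_\mathcal F(P,R)$, and (ii) every $\varphi\in\operatorname{Hom}_\mathcal F(P,R)$ factors as an isomorphism $P\to\varphi(P)$ in $\mathcal F$ with inverse in $\mathcal F$ followed by inclusion. A subsystem $\mathcal G$ on $T\le S$ is a fusion system on $T$ with $\operatorname{Hom}_\mathcal G(P,R)\subseteq\operatorname{Hom}_\mathcal F(P,R)$. $Q$ is fully $\mathcal F$-normalized (resp. centralized) if $|N_S(Q)|$ (resp. $|C_S(Q)|$) is maximal among $\mathcal F$-conjugates of $Q$; $Q$ is $\mathcal F$-centric if $C_S(Q')=Z(Q')$ for every $\mathcal F$-conjugate $Q'$. For $\varphi\in\operatorname{Hom}_\mathcal F(Q,S)$, $N_\varphi=\{g\in N_S(Q):\varphi c_g|_Q\varphi^{-1}\in\operatorname{Aut}_S(\varphi(Q))\}$,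 $\operatorname{Aut}_S(\cdot)$ denoting automorphisms induced by conjugation by elements of $S$. $\mathcal F$ is saturated if every fully normalized $Q$ is fully centralized with $\operatorname{Aut}_S(Q)$ a Sylow $p$-subgroup of $\operatorname{Aut}_\mathcal F(Q)$, and every $\varphi\in\operatorname{Hom}_\mathcal F(Q,S)$ with $\varphi(Q)$ fully centralized extends to a morphism of $\mathcal F$ defined on $N_\varphi$. *)

From HB Require Import structures.
From mathcomp Require Import all_boot all_fingroup all_solvable.
Set Implicit Arguments. Unset Strict Implicit. Unset Printing Implicit Defensive.
Local Open Scope group_scope.

Section FusionDefs.
Variable gT : finGroupType.

(* A morphism P -> R is represented by a finite function gT -> gT that is
   the identity outside P (canonical representative, independent of R). *)
Definition homs := {set gT} -> {set gT} -> {set {ffun gT -> gT}}.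

Definition is_inj_hom (P R : {set gT}) (f : {ffun gT -> gT}) : Prop :=
  [/\ {in P &, {morph f : x y / x * y}}, {in P &, injective f},
      f @: P \subset R & forall x, x \notin P -> f x = x].

(* conjugation x |-> g x g^-1 on P (note x ^ y = y^-1 x y in MathComp) *)
Definition conjf (P : {set gT}) (g : gT) : {ffun gT -> gT} :=
  [ffun x => if x \in P then x ^ g^-1 else x].

Definition compf (P : {set gT}) (h f : {ffun gT -> gT}) : {ffun gT -> gT} :=
  [ffun x => if x \in P then h (f x) else x].

Definition is_fusion_system (S : {set gT}) (F : homs) : Prop :=
  [/\ (forall P R : {group gT}, P \subset S -> R \subset S ->
         forall f, f \in F P R -> is_inj_hom P R f),
      (forall (P R : {group gT}) g, P \subset S -> R \subset S -> g \in S ->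
         P :^ g^-1 \subset R -> conjf P g \in F P R),
      (forall P Q R : {group gT}, P \subset S -> Q \subset S -> R \subset S ->
         forall f h, f \in F P Q -> h \in F Q R -> compf P h f \in F P R) &
      (forall P R : {group gT}, P \subset S -> R \subset S ->
         forall f, f \in F P R ->
           f \in F P (f @: P) /\
           exists2 g, g \in F (f @: P) P &
             (forall x, x \in P -> g (f x) = x) /\
             (forall y, y \in f @: P -> f (g y) = y))].

Definition is_subsystem (S : {set gT}) (F : homs) (T : {set gT}) (G : homs) : Prop :=
  is_fusion_system T G /\
  (forall P R : {group gT}, P \subset T -> R \subset T -> G P R \subset F P R).

Definition fully_normalized (S : {set gT}) (F : homs) (Q : {set gT}) : Prop :=
  forall f, f \in F Q S -> #|'N_S(f @: Q)| <= #|'N_S(Q)|.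

Definition fully_centralized (S : {set gT}) (F : homs) (Q : {set gT}) : Prop :=
  forall f, f \in F Q S -> #|'C_S(f @: Q)| <= #|'C_S(Q)|.

Definition centric (S : {set gT}) (F : homs) (Q : {set gT}) : Prop :=
  forall f, f \in F Q S -> 'C_S(f @: Q) = 'Z(f @: Q).

(* Aut_F(Q), as permutations of gT fixing everything outside Q *)
Definition AutF (F : homs) (Q : {set gT}) : {set {perm gT}} :=
  [set s : {perm gT} | [ffun x => s x] \in F Q Q].

Definition AutS (S Q : {set gT}) : {set {perm gT}} :=
  [set s : {perm gT} | [forall x, (x \notin Q) ==> (s x == x)] &&
     [exists g in 'N_S(Q), [forall x in Q, s x == x ^ g^-1]]].

Definition Nphi (S Q : {set gT}) (f : {ffun gT -> gT}) : {set gT} :=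
  [set g in 'N_S(Q) | [exists h in S, [forall y in Q, f (y ^ g^-1) == f y ^ h^-1]]].

Definition saturated (p : nat) (S : {set gT}) (F : homs) : Prop :=
  [/\ is_fusion_system S F,
      (forall Q : {group gT}, Q \subset S -> fully_normalized S F Q ->
         fully_centralized S F Q /\ p.-Sylow(AutF F Q) (AutS S Q)) &
      (forall (Q : {group gT}) f, Q \subset S -> f \in F Q S ->
         fully_centralized S F (f @: Q) ->
         exists2 g, g \in F (Nphi S Q f) S & forall x, x \in Q -> g x = f x)].

End FusionDefs.

From mathcomp Require Import all_boot all_fingroup all_solvable zify.
Set Implicit Arguments. Unset Strict Implicit. Unset Printing Implicit Defensive.
Local Open Scope group_scope.

(* The proof follows the classical argument.
   - Two consequences of saturation (with S a p-group): a p-element of Aut_F(R)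
     becomes, after moving R to a fully normalized conjugate, conjugation by an
     element of S; hence an automorphism of R that is the identity on an
     F-centric subgroup Q normal in R is conjugation by an element of Q, and
     two F-morphisms R -> S that agree on such a Q differ by an element of Q.
   - Going up: if Hom_F(P, T) = Hom_G(P, T) for an F-centric P, then the same
     holds for N_T(P), which is again F-centric: any phi in Hom_F(N_T(P), T)
     restricts to P inside G, G-saturation extends this restriction to some
     chi on N_T(P) in G, and phi = chi o c_u with u in P.  Since N_T(P) > P
     when P < T, induction yields Hom_F(T, T) = Hom_G(T, T).
   - Finally, for x in N_S(T), the p-element c_x of Aut_F(T) = Aut_G(T) is
     inner since G is saturated on T, say c_x = c_u with u in T; then x^-1 u
     lies in C_S(T) <= C_S(Q) <= Q <= T, so x is in T.  Hence N_S(T) = T, and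
     T = S as S is nilpotent. *)

Section Homomorphisms.
Variable gT : finGroupType.
Implicit Types (P Q : {group gT}) (R : {set gT}) (f b : {ffun gT -> gT}).

Lemma hom1 P R f : is_inj_hom P R f -> f 1 = 1.
Proof. by case=> fM _ _ _; apply: (mulgI (f 1)); rewrite -fM ?group1 // !mulg1. Qed.

Lemma homM P R f x y : is_inj_hom P R f -> x \in P -> y \in P ->
  f (x * y) = f x * f y.
Proof. by case=> fM _ _ _; apply: fM. Qed.

Lemma homV P R f x : is_inj_hom P R f -> x \in P -> f x^-1 = (f x)^-1.
Proof.
move=> hf Px; apply: (mulgI (f x)).
by rewrite -(homM hf) ?groupV // !mulgV (hom1 hf).
Qed.

Lemma homJ P R f x y : is_inj_hom P R f -> x \in P -> y \in P ->
  f (x ^ y) = f x ^ f y.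
Proof. by move=> hf Px Py; rewrite !conjgE !(homM hf) ?(homV hf) ?groupM ?groupV. Qed.

Lemma homX P R f x n : is_inj_hom P R f -> x \in P -> f (x ^+ n) = f x ^+ n.
Proof.
move=> hf Px; elim: n => [|n IHn]; first by rewrite !expg0 (hom1 hf).
by rewrite !expgS (homM hf) ?groupX // IHn.
Qed.

Lemma hom_inj P R f x y : is_inj_hom P R f -> x \in P -> y \in P ->
  f x = f y -> x = y.
Proof. by case=> _ fI _ _; apply: fI. Qed.

Lemma hom_out P R f x : is_inj_hom P R f -> x \notin P -> f x = x.
Proof. by case=> _ _ _ fP /fP. Qed.

Lemma hom_sub P R f : is_inj_hom P R f -> f @: P \subset R.
Proof. by case. Qed.

Lemma hom_in P R f x : is_inj_hom P R f -> x \in P -> f x \in R.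
Proof. by move=> /hom_sub/subsetP sfPR Px; apply/sfPR/imset_f. Qed.

Lemma hom_img_group P R f : is_inj_hom P R f -> group_set (f @: P).
Proof.
move=> hf; apply/group_setP; split; first by apply/imsetP; exists 1; rewrite ?(hom1 hf).
move=> _ _ /imsetP[x Px ->] /imsetP[y Py ->].
by apply/imsetP; exists (x * y); rewrite ?groupM // (homM hf).
Qed.

Definition img_group P R f (hf : is_inj_hom P R f) : {group gT} :=
  Group (hom_img_group hf).

Lemma card_hom_img P R f : is_inj_hom P R f -> #|f @: P| = #|P|.
Proof. by case=> _ fI _ _; apply: card_in_imset. Qed.

Lemma card_center_img P R f : is_inj_hom P R f -> #|'Z(f @: P)| <= #|'Z(P)|.
Proof.
move=> hf; apply: leq_trans (leq_imset_card f _); apply: subset_leq_card.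
apply/subsetP => z; rewrite inE => /andP[/imsetP[x Px ->] /centP cz].
apply: imset_f; rewrite inE Px; apply/centP => y Py.
apply: (hom_inj hf); rewrite ?groupM // !(homM hf) //.
by apply: cz; apply: imset_f.
Qed.

Lemma hom_aut_inj P f : is_inj_hom P P f -> injective f.
Proof.
move=> hf x y; case: (boolP (x \in P)) => Px; case: (boolP (y \in P)) => Py fxy.
- exact: hom_inj hf Px Py fxy.
- by have := hom_in hf Px; rewrite fxy (hom_out hf Py) (negbTE Py).
- by have := hom_in hf Py; rewrite -fxy (hom_out hf Px) (negbTE Px).
- by rewrite -(hom_out hf Px) -(hom_out hf Py).
Qed.

Definition permf P f (hf : is_inj_hom P P f) : {perm gT} := perm (hom_aut_inj hf).

Lemma permfE P f (hf : is_inj_hom P P f) x : permf hf x = f x.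
Proof. exact: permE. Qed.

Lemma permf_ffunE P f (hf : is_inj_hom P P f) : [ffun x => permf hf x] = f.
Proof. by apply/ffunP => x; rewrite ffunE permfE. Qed.

Lemma permf_pelt p P b n (hb : is_inj_hom P P b) :
  p.-nat n -> {in P, forall x, iter n b x = x} -> p.-elt (permf hb).
Proof.
move=> pn bn; apply: pnat_dvd pn; rewrite order_dvdn; apply/eqP/permP => y.
rewrite permX perm1 (@eq_iter _ _ b) => [|z]; last exact: permfE.
case: (boolP (y \in P)) => [/bn //|Py].
by elim: n {bn} => //= k ->; rewrite (hom_out hb).
Qed.

(* If R normalizes Q, C_S(Q) <= Q, and b in Aut(R) is the identity on Q, then
   for x in R the element w = b(x) x^-1 centralizes Q, hence lies in Q and is
   fixed by b; so b^k(x) = w^k x, and b^|S| is the identity on R. *)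
Lemma iter_card_fixing_selfcentralizing (S Q R : {group gT}) b :
    Q \subset R -> R \subset S -> R \subset 'N(Q) -> 'C_S(Q) \subset Q ->
    is_inj_hom R R b -> {in Q, b =1 id} ->
  {in R, forall x, iter #|S| b x = x}.
Proof.
move=> sQR sRS nQR sCQ hb bQ x Rx.
pose w := b x * x^-1.
have Rw : w \in R by rewrite groupM ?groupV // (hom_in hb Rx).
have Qw : w \in Q.
  apply: (subsetP sCQ); rewrite inE (subsetP sRS _ Rw) /=; apply/centP => q Qq.
  have Qqx : q ^ x \in Q by rewrite memJ_norm // (subsetP nQR).
  have := bQ _ Qqx; rewrite (homJ hb (subsetP sQR _ Qq) Rx) bQ // => bqx.
  by apply/commute_sym/commgP/conjg_fixP; rewrite /w conjgM bqx conjgK.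
have bx : b x = w * x by rewrite /w mulgKV.
have iter_w n : iter n b x = w ^+ n * x.
  elim: n => [|n IHn]; first by rewrite mul1g.
  rewrite iterS IHn (homM hb (groupX n Rw) Rx) (homX n hb Rw) (bQ _ Qw) bx.
  by rewrite mulgA -expgSr.
by rewrite iter_w expg_cardG ?mul1g // (subsetP sRS).
Qed.

Lemma iter_conjf P x k y : x \in 'N(P) -> y \in P ->
  iter k (conjf P x) y = y ^ (x ^+ k)^-1.
Proof.
move=> Nx Py; elim: k => [|k IHk]; first by rewrite expg0 invg1 conjg1.
rewrite iterS IHk ffunE memJ_norm ?groupV ?groupX // Py.
by rewrite -conjgM -invMg -expgS.
Qed.

Lemma AutS_group (S Q : {group gT}) : group_set (AutS S Q).
Proof.
apply/group_setP; split.
  rewrite inE; apply/andP; split; first by apply/forallP => x; rewrite perm1 eqxx implybT.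
  apply/existsP; exists 1; rewrite group1; apply/forallP => x; apply/implyP => _.
  by rewrite perm1 invg1 conjg1.
move=> s t; rewrite !inE => /andP[/forallP so /existsP[g /andP[Ng /forallP sg]]].
move=> /andP[/forallP to /existsP[h /andP[Nh /forallP th]]].
apply/andP; split.
  apply/forallP => x; apply/implyP => Qx; rewrite permM.
  by have /implyP/(_ Qx)/eqP-> := so x; have /implyP/(_ Qx) := to x.
apply/existsP; exists (h * g); rewrite groupM //; apply/forallP => x.
apply/implyP => Qx; rewrite permM; have /implyP/(_ Qx)/eqP-> := sg x.
have Qxg : x ^ g^-1 \in Q by rewrite memJ_norm // groupV; case/setIP: Ng.
by have /implyP/(_ Qxg)/eqP-> := th (x ^ g^-1); rewrite invMg conjgM.
Qed.

End Homomorphisms.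

Section FusionSystem.
Variable gT : finGroupType.
Implicit Types (P Q R : {group gT}) (f h : {ffun gT -> gT}).
Variables (S : {group gT}) (F : homs gT).
Hypothesis HF : is_fusion_system S F.

Lemma F_hom P R f : P \subset S -> R \subset S -> f \in F P R -> is_inj_hom P R f.
Proof. by case: HF => homF _ _ _ sPS sRS; apply: homF. Qed.

Lemma F_conj P R x : P \subset S -> R \subset S -> x \in S -> P :^ x^-1 \subset R ->
  conjf P x \in F P R.
Proof. by case: HF => _ conjF _ _; apply: conjF. Qed.

Lemma F_comp P Q R f h : P \subset S -> Q \subset S -> R \subset S ->
  f \in F P Q -> h \in F Q R -> compf P h f \in F P R.
Proof. by case: HF => _ _ compF _ sPS sQS sRS; apply: compF. Qed.

Lemma F_inv P R f : P \subset S -> R \subset S -> f \in F P R ->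
  f \in F P (f @: P) /\
  exists2 g, g \in F (f @: P) P &
    {in P, forall x, g (f x) = x} /\ {in f @: P, forall y, f (g y) = y}.
Proof. by case: HF => _ _ _ invF sPS sRS; apply: invF. Qed.

Lemma compfE (P : {set gT}) h f x : x \in P -> compf P h f x = h (f x).
Proof. by move=> Px; rewrite ffunE Px. Qed.

Lemma compf_img (P : {set gT}) h f : compf P h f @: P = h @: (f @: P).
Proof. by rewrite -imset_comp; apply: eq_in_imset => x Px; rewrite compfE. Qed.

Lemma F_incl P R : P \subset S -> R \subset S -> P \subset R -> conjf P 1 \in F P R.
Proof. by move=> *; apply: F_conj; rewrite ?group1 // invg1 conjsg1. Qed.

Lemma conjf1E (P : {set gT}) : conjf P 1 = [ffun x => x].
Proof. by apply/ffunP => x; rewrite !ffunE invg1 conjg1; case: ifP. Qed.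

Definition restrf (P : {set gT}) f := [ffun x => if x \in P then f x else x].

Lemma restrf_img (P : {set gT}) f : restrf P f @: P = f @: P.
Proof. by apply: eq_in_imset => x Px; rewrite ffunE Px. Qed.

Lemma F_restr P P' R f : P \subset S -> R \subset S -> P' \subset P ->
  f \in F P R -> restrf P' f \in F P' R.
Proof.
move=> sPS sRS sP'P fF; have sP'S := subset_trans sP'P sPS.
suff -> : restrf P' f = compf P' f (conjf P' 1).
  exact: F_comp sP'S sPS sRS (F_incl sP'S sPS sP'P) fF.
by apply/ffunP => x; rewrite conjf1E !ffunE; case: ifP.
Qed.

Lemma F_widen P R R' f : P \subset S -> R \subset R' -> R' \subset S ->
  f \in F P R -> f \in F P R'.
Proof.
move=> sPS sRR' sR'S fF; have sRS := subset_trans sRR' sR'S.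
have hf := F_hom sPS sRS fF.
suff <- : compf P (conjf R 1) f = f by exact: F_comp fF (F_incl sRS sR'S sRR').
apply/ffunP => x; rewrite conjf1E !ffunE; case: ifP => // /negbT Px.
by rewrite (hom_out hf Px).
Qed.

Lemma AutF_group R : R \subset S -> group_set (AutF F R).
Proof.
move=> sRS; apply/group_setP; split.
  rewrite inE; suff -> : [ffun x => (1 : {perm gT}) x] = conjf R 1 by apply: F_incl.
  by rewrite conjf1E; apply/ffunP => x; rewrite !ffunE perm1.
move=> s t; rewrite !inE => sF tF.
have hs := F_hom sRS sRS sF; have ht := F_hom sRS sRS tF.
suff -> : [ffun x => (s * t) x] = compf R [ffun x => t x] [ffun x => s x].
  exact: F_comp sF tF.
apply/ffunP => x; rewrite !ffunE permM; case: ifP => // /negbT Rx.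
by have := hom_out ht Rx; have := hom_out hs Rx; rewrite !ffunE => -> ->.
Qed.

Lemma centric_sub Q f : centric S F Q -> f \in F Q S -> 'C_S(f @: Q) \subset f @: Q.
Proof. by move=> cQ fF; rewrite (cQ f fF) center_sub. Qed.

Lemma centric_selfcentralizing Q : Q \subset S -> centric S F Q -> 'C_S(Q) \subset Q.
Proof.
move=> sQS cQ; have := centric_sub cQ (F_incl sQS (subxx S) sQS).
by rewrite conjf1E (@eq_imset _ _ _ id) ?imset_id // => x; rewrite ffunE.
Qed.

Lemma centric_overgroup P R : P \subset R -> R \subset S ->
  centric S F P -> centric S F R.
Proof.
move=> sPR sRS cP f fF; have hf := F_hom sRS (subxx S) fF.
apply/eqP; rewrite eqEsubset [_ \subset 'C_S(_)]setSI ?(hom_sub hf) // andbT.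
apply/subsetP => c /setIP[Sc cfR]; rewrite inE cfR andbT.
have sfPR : f @: P \subset f @: R by apply: imsetS.
have := centric_sub cP (F_restr sRS (subxx S) sPR fF); rewrite restrf_img.
move/subsetP/(_ c) => cfP; apply/(subsetP sfPR)/cfP.
by rewrite inE Sc (subsetP (centS sfPR)).
Qed.

End FusionSystem.

Section Saturation.
Variable gT : finGroupType.
Implicit Types (P Q R : {group gT}) (f b : {ffun gT -> gT}).
Variables (p : nat) (S : {group gT}) (F : homs gT).
Hypotheses (satF : saturated p S F) (pS : p.-group S).

Let HF : is_fusion_system S F. Proof. by case: satF. Qed.

Lemma exists_fully_normalized R : R \subset S ->
  exists2 g, g \in F R S & fully_normalized S F (g @: R).
Proof.
move=> sRS; have sSS := subxx S.
have c1 : conjf R 1 \in F R S := F_incl HF sRS sSS sRS.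
case: (arg_maxnP (fun f => #|'N_S(f @: R)|) c1).
move=> g gF gmax; exists g => // f fF.
have [gR _] := F_inv HF sRS sSS gF; have hg := F_hom HF sRS sSS gF.
have := gmax _ (F_comp HF sRS (hom_sub hg : img_group hg \subset S) sSS gR fF).
by rewrite compf_img.
Qed.

(* Sylow's theorem in Aut_F(R), R fully normalized: a p-element of Aut_F(R)
   is conjugate in Aut_F(R) to an automorphism induced by some t in S. *)
Lemma pelt_AutF_conj_AutS R s : R \subset S -> fully_normalized S F R ->
    s \in AutF F R -> p.-elt s ->
  exists2 a, a \in AutF F R &
    exists2 t, t \in S & {in R, forall y, a (s (a^-1 y)) = y ^ t^-1}.
Proof.
move=> sRS fnR sA ps; have [_ satN _] := satF.
have [_ sylAS] := satN R sRS fnR.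
pose AF := Group (AutF_group HF sRS); pose AS := Group (AutS_group S R).
have sA' : <[s]> \subset AF by rewrite cycle_subG.
have [d dA sd] := Sylow_subJ (sylAS : p.-Sylow(AF) AS) sA' ps.
have : s ^ d^-1 \in AS by rewrite -mem_conjg (subsetP sd) // cycle_id.
rewrite inE => /andP[_ /existsP[t /andP[/setIP[St _] /forallP stE]]].
exists d^-1; first by have : d^-1 \in AF by rewrite groupV.
exists t => // y Ry; have /implyP/(_ Ry)/eqP <- := stE y.
by rewrite conjgE invgK !permM.
Qed.

Lemma pelt_aut_conj_model R b n : R \subset S -> b \in F R R -> p.-nat n ->
    {in R, forall x, iter n b x = x} ->
  exists2 e, e \in F R S &
    exists2 t, t \in S & {in R, forall x, e (b x) = e x ^ t^-1}.
Proof.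
move=> sRS bF pn bn; have sSS := subxx S.
have [g gF fnR'] := exists_fully_normalized sRS.
have hg := F_hom HF sRS sSS gF; pose R' := img_group hg.
have sR'S : R' \subset S := hom_sub hg.
have [gR' [g' g'F [g'g _]]] := F_inv HF sRS sSS gF.
have {}gR' : g \in F R R' := gR'; have {}g'F : g' \in F R' R := g'F.
have hb := F_hom HF sRS sRS bF.
(* b' = g b g^-1 is the automorphism of R' = g(R) corresponding to b *)
pose b' := compf R' g (compf R' b g').
have b'F : b' \in F R' R'.
  exact (F_comp HF sR'S sRS sR'S (F_comp HF sR'S sRS sRS g'F bF) gR').
have hb' := F_hom HF sR'S sR'S b'F.
have b'E : {in R, forall x, b' (g x) = g (b x)}.
  by move=> x Rx; rewrite !compfE ?g'g // imset_f.
have iter_b' k : {in R, forall x, iter k b' (g x) = g (iter k b x)}.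
  move=> x Rx; elim: k => //= k ->; rewrite b'E //.
  by elim: k => //= k; apply: hom_in hb.
have b'n : {in R', forall y, iter n b' y = y}.
  by move=> _ /imsetP[x Rx ->]; rewrite iter_b' // bn.
have sA : permf hb' \in AutF F R' by rewrite inE permf_ffunE.
have [a aA [t St atE]] :=
  pelt_AutF_conj_AutS sR'S fnR' sA (permf_pelt hb' pn b'n).
have aF : [ffun y => a y] \in F R' R' by move: aA; rewrite inE.
have ha := F_hom HF sR'S sR'S aF.
exists (compf R [ffun y => a y] g).
  exact (F_widen HF sRS sR'S sSS (F_comp HF sRS sR'S sR'S gR' aF)).
exists t => // x Rx; have Rgx : g x \in R' by apply: imset_f.
rewrite !compfE ?(hom_in hb) // -b'E // -(permfE hb') !ffunE.
have aRgx : a (g x) \in R' by have := hom_in ha Rgx; rewrite ffunE.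
by rewrite -atE // permK.
Qed.

(* An F-automorphism of R which is the identity on an F-centric Q normalized
   by R is conjugation by an element of Q (b^|S| = 1, so b is conjugate to
   conjugation by some t, and t centralizes, hence lies in, the image of Q). *)
Lemma aut_fixing_centric_inner Q R b : Q \subset R -> R \subset S ->
    R \subset 'N(Q) -> centric S F Q -> b \in F R R -> {in Q, b =1 id} ->
  exists2 u, u \in Q & {in R, forall x, b x = x ^ u^-1}.
Proof.
move=> sQR sRS nQR cQ bF bQ; have sQS := subset_trans sQR sRS.
have hb := F_hom HF sRS sRS bF.
have sCQ := centric_selfcentralizing HF sQS cQ.
have bn := iter_card_fixing_selfcentralizing sQR sRS nQR sCQ hb bQ.
have [e eF [t St ebE]] := pelt_aut_conj_model sRS bF pS bn.
have he := F_hom HF sRS (subxx S) eF.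
have tC : t \in 'C_S(e @: Q).
  rewrite inE St; apply/centP => _ /imsetP[q Qq ->].
  have := ebE q (subsetP sQR _ Qq); rewrite bQ // => eqt.
  by rewrite -[t]invgK; apply/commute_sym/commuteV/commgP/conjg_fixP.
have := subsetP (centric_sub cQ (F_restr HF sRS (subxx S) sQR eF)) t.
rewrite restrf_img => /(_ tC) /imsetP[u Qu tE]; exists u => // x Rx.
have Ru := subsetP sQR _ Qu.
apply: (hom_inj he); rewrite ?(hom_in hb Rx) ?groupJ ?groupV //.
by rewrite ebE // tE (homJ he) ?groupV // (homV he).
Qed.

(* Two F-morphisms on R which agree on an F-centric Q normalized by R have the
   same image: phi(x) chi(x)^-1 centralizes phi(Q) = chi(Q), so lies in it. *)
Lemma agreeing_morphisms_img Q R phi chi : Q \subset R -> R \subset S ->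
    R \subset 'N(Q) -> centric S F Q -> phi \in F R S -> chi \in F R S ->
    {in Q, phi =1 chi} ->
  phi @: R \subset chi @: R.
Proof.
move=> sQR sRS nQR cQ phF chF agr; have sSS := subxx S.
have hph := F_hom HF sRS sSS phF; have hch := F_hom HF sRS sSS chF.
have imQ : phi @: Q = chi @: Q by apply: eq_in_imset.
have sCQ := centric_sub cQ (F_restr HF sRS sSS sQR phF).
rewrite restrf_img imQ in sCQ.
apply/subsetP => _ /imsetP[x Rx ->].
pose c := phi x * (chi x)^-1.
have cC : c \in 'C_S(chi @: Q).
  rewrite inE groupM ?groupV ?(hom_in hph Rx) ?(hom_in hch Rx) //= -imQ.
  apply/centP => _ /imsetP[q Qq ->]; apply/commute_sym/commgP/conjg_fixP.
  have Qqx : q ^ x \in Q by rewrite memJ_norm // (subsetP nQR).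
  have Rq := subsetP sQR _ Qq.
  have phiJ : phi q ^ phi x = phi q ^ chi x.
    by rewrite -(homJ hph Rq Rx) (agr _ Qqx) (homJ hch Rq Rx) (agr _ Qq).
  by rewrite /c conjgM phiJ conjgK.
have /(subsetP (imsetS chi sQR)) cR := subsetP sCQ _ cC.
have -> : phi x = c * chi x by rewrite /c mulgKV.
by apply: (group_setP (hom_img_group hch)).2 cR (imset_f _ Rx).
Qed.

Lemma agreeing_morphisms_conj Q R phi chi : Q \subset R -> R \subset S ->
    R \subset 'N(Q) -> centric S F Q -> phi \in F R S -> chi \in F R S ->
    {in Q, phi =1 chi} ->
  exists2 u, u \in Q & {in R, forall x, phi x = chi (x ^ u^-1)}.
Proof.
move=> sQR sRS nQR cQ phF chF agr; have sSS := subxx S.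
have hph := F_hom HF sRS sSS phF; have hch := F_hom HF sRS sSS chF.
pose Rph := img_group hph; pose Rch := img_group hch.
have sRchS : Rch \subset S := hom_sub hch.
have [phR _] := F_inv HF sRS sSS phF.
have sRphRch : Rph \subset Rch.
  exact: agreeing_morphisms_img sQR sRS nQR cQ phF chF agr.
have phRch : phi \in F R Rch := F_widen HF sRS sRphRch sRchS phR.
have [_ [g gF [gch chg]]] := F_inv HF sRS sSS chF.
(* b = chi^-1 phi is an automorphism of R fixing Q *)
have bF : compf R g phi \in F R R := F_comp HF sRS sRchS sRS phRch gF.
have bQ : {in Q, compf R g phi =1 id}.
  by move=> y Qy; rewrite compfE ?(subsetP sQR) // agr // gch // (subsetP sQR).
have [u Qu bE] := aut_fixing_centric_inner sQR sRS nQR cQ bF bQ.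
exists u => // x Rx; rewrite -bE // compfE // chg //.
exact: (subsetP sRphRch) (imset_f _ Rx).
Qed.

Lemma pelt_aut_top_inner b n : b \in F S S -> p.-nat n ->
    {in S, forall x, iter n b x = x} ->
  exists2 u, u \in S & {in S, forall x, b x = x ^ u^-1}.
Proof.
move=> bF pn bn; have sSS := subxx S.
have [e eF [t St ebE]] := pelt_aut_conj_model sSS bF pn bn.
have he := F_hom HF sSS sSS eF; have hb := F_hom HF sSS sSS bF.
have eS : e @: S = S.
  by apply/eqP; rewrite eqEcard (hom_sub he) (card_hom_img he) leqnn.
have /imsetP[u Su tE] : t \in e @: S by rewrite eS.
exists u => // x Sx; apply: (hom_inj he); rewrite ?(hom_in hb Sx) ?groupJ ?groupV //.
by rewrite ebE // tE (homJ he) ?groupV // (homV he).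
Qed.

End Saturation.

Section Subsystem.
Variable gT : finGroupType.
Implicit Types (P Q R : {group gT}) (f phi psi : {ffun gT -> gT}).

(* For phi defined on N_T(P), the set N_psi of the restriction psi of phi to P
   is all of N_T(P): phi itself realizes the required conjugations. *)
Lemma Nphi_restr (T P : {group gT}) phi : P \subset T ->
  is_inj_hom 'N_T(P) T phi -> Nphi T P (restrf P phi) = 'N_T(P).
Proof.
move=> sPT hph; apply/setP => g; rewrite inE andb_idr // => gN.
have sPN : P \subset 'N_T(P) by rewrite subsetI sPT normG.
apply/existsP; exists (phi g); rewrite (hom_in hph gN) /=.
apply/forallP => y; apply/implyP => Py.
have Pyg : y ^ g^-1 \in P by rewrite memJ_norm // groupV; case/setIP: gN.
rewrite !ffunE Py Pyg (homJ hph (subsetP sPN _ Py)) ?groupV //.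
by rewrite (homV hph gN).
Qed.

Variables (p : nat) (S T : {group gT}) (F G : homs gT).
Hypotheses (pS : p.-group S) (satF : saturated p S F) (sTS : T \subset S).
Hypotheses (HG : is_fusion_system T G) (satG : saturated p T G).
Hypothesis subGF : forall P R, P \subset T -> R \subset T -> G P R \subset F P R.

Let HF : is_fusion_system S F. Proof. by case: satF. Qed.

Lemma G_in_F P f : P \subset T -> f \in G P T -> f \in F P S.
Proof.
move=> sPT fG; have fF := subsetP (subGF sPT (subxx T)) _ fG.
exact: (F_widen HF (subset_trans sPT sTS) sTS (subxx S) fF).
Qed.

(* G-images of F-centric subgroups are fully centralized in G: for f in
   Hom_G(psi(P), T), C_T(f psi(P)) lies in Z(f psi(P)), which is no larger
   than Z(psi(P)) <= C_T(psi(P)). *)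
Lemma centric_img_fully_centralized P psi : P \subset T -> centric S F P ->
  psi \in G P T -> fully_centralized T G (psi @: P).
Proof.
move=> sPT cP psG f fG; have sTT := subxx T.
have hps := F_hom HG sPT sTT psG; pose X := img_group hps.
have sXT : X \subset T := hom_sub hps.
have [psX _] := F_inv HG sPT sTT psG.
have {}fG : f \in G X T := fG; have hf := F_hom HG sXT sTT fG.
have fpsS := G_in_F sPT (F_comp HG sPT sXT sTT psX fG).
have sCfX := centric_sub cP fpsS; rewrite compf_img in sCfX.
apply: (@leq_trans #|'Z(f @: X)|).
  apply/subset_leq_card/subsetP => c /setIP[Tc cC]; rewrite inE cC andbT.
  by apply: (subsetP sCfX); rewrite inE cC (subsetP sTS).
apply: leq_trans (card_center_img hf) _.
by apply: subset_leq_card; rewrite setSI.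
Qed.

Lemma norm_controlled P : P \subset T -> centric S F P -> F P T = G P T ->
  F 'N_T(P) T = G 'N_T(P) T.
Proof.
move=> sPT cP eP; have sTT := subxx T; have [_ _ extG] := satG.
pose R := 'N_T(P)%G.
have sRT : R \subset T := subsetIl _ _; have sRS := subset_trans sRT sTS.
have sPR : P \subset R by rewrite subsetI sPT normG.
have nPR : R \subset 'N(P) := subsetIr _ _.
apply/setP => phi; apply/idP/idP => [phF|]; last exact: (subsetP (subGF sRT sTT)).
have hph := F_hom HF sRS sTS phF.
have psG : restrf P phi \in G P T by rewrite -eP (F_restr HF sRS sTS sPR phF).
have [chi chG chE] := extG P _ sPT psG (centric_img_fully_centralized sPT cP psG).
rewrite Nphi_restr // in chG.
have agr : {in P, phi =1 chi} by move=> y Py; rewrite chE // ffunE Py.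
have phS : phi \in F R S := F_widen HF sRS sTS (subxx S) phF.
have [u Pu uE] :=
  agreeing_morphisms_conj satF pS sPR sRS nPR cP phS (G_in_F sRT chG) agr.
have Ru : u \in R := subsetP sPR _ Pu.
have cuG : conjf R u \in G R R.
  by apply: (F_conj HG sRT sRT (subsetP sRT _ Ru)); rewrite conjGid ?groupV.
suff -> : phi = compf R chi (conjf R u) by exact (F_comp HG sRT sRT sTT cuG chG).
apply/ffunP => x; rewrite ffunE; case: ifP => [Rx|/negbT Rx].
  by rewrite ffunE Rx uE.
by rewrite (hom_out hph).
Qed.

Lemma control_top Q : Q \subset T -> centric S F Q -> F Q T = G Q T ->
  F T T = G T T.
Proof.
have pT : p.-group T := pgroupS sTS pS.
have [n] := ubnP (#|T| - #|Q|).
elim: n Q => // n IHn Q; rewrite ltnS => leQn sQT cQ eQ.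
case: (eqVproper sQT) => [eqQT | prQT]; first by rewrite eqQT in eQ.
have prQN := nilpotent_proper_norm (pgroup_nil pT) prQT.
have sNT : 'N_T(Q) \subset T := subsetIl _ _.
apply: (IHn 'N_T(Q)%G _ sNT _ (norm_controlled sQT cQ eQ)).
  move: leQn (proper_card prQN) (subset_leq_card sNT) => /=.
  by set t := #|T|; set q := #|Q|; set m := #|_|; lia.
exact (centric_overgroup HF (proper_sub prQN) (subset_trans sNT sTS) cQ).
Qed.

(* Once Aut_F(T) = Aut_G(T), every x in N_S(T) induces an inner automorphism
   c_u of T (G being saturated on T), so x^-1 u centralizes Q and x is in T. *)
Lemma normalizer_controlled Q : F T T = G T T -> Q \subset T -> centric S F Q ->
  'N_S(T) \subset T.
Proof.
move=> eTT sQT cQ; apply/subsetP => x /setIP[Sx Nx].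
have cxG : conjf T x \in G T T.
  by rewrite -eTT; apply: (F_conj HF sTS sTS Sx); rewrite (normP _) ?groupV.
have cxn : {in T, forall y, iter #|S| (conjf T x) y = y}.
  by move=> y Ty; rewrite iter_conjf // expg_cardG // invg1 conjg1.
have [u Tu cxE] := pelt_aut_top_inner satG cxG pS cxn.
have wC : x^-1 * u \in 'C_S(Q).
  rewrite inE groupM ?groupV ?(subsetP sTS _ Tu) //=.
  apply/centP => q Qq; apply/commute_sym/commgP/conjg_fixP.
  have := cxE q (subsetP sQT _ Qq); rewrite ffunE (subsetP sQT _ Qq) => cxq.
  by rewrite conjgM cxq conjgKV.
have := subsetP (centric_selfcentralizing HF (subset_trans sQT sTS) cQ) _ wC.
by move/(subsetP sQT); rewrite groupMr // groupV.
Qed.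

End Subsystem.

Theorem lemma2p7 (gT : finGroupType) (p : nat) (S T : {group gT})
    (F G : homs gT) :
  prime p -> p.-group S -> saturated p S F ->
  T \subset S -> is_subsystem S F T G -> saturated p T G ->
  (exists2 Q : {group gT}, Q \subset T &
     centric S F Q /\ F Q T = G Q T) ->
  AutF F T = AutF G T /\ T :=: S.
Proof.
move=> _ pS satF sTS [HG subGF] satG [Q sQT [cQ eQ]].
have eTT : F T T = G T T := control_top pS satF sTS HG satG subGF sQT cQ eQ.
split; first by apply/setP => s; rewrite !inE eTT.
have sNT : 'N_S(T) \subset T :=
  normalizer_controlled pS satF sTS satG eTT sQT cQ.
case: (eqVproper sTS) => // /(nilpotent_proper_norm (pgroup_nil pS)).
by rewrite properE sNT andbF.
Qed.
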